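(* Let $\mathbf{D}$ be a structure whose universe is $\{0,1\}$ and let $\mathbf{X}$ be a $\mathbf{D}$-separated structure with universe $X$. For finite $s,t\subseteq X$ define $s\sqsubseteq t$ iff for every homomorphism $h:\mathbf{X}\to\mathbf{D}$ we have $\min h[s]\le\max h[t]$ (with $\min\emptyset=1$, $\max\emptyset=0$). Then the set of homomorphisms from $\mathbf{X}$ to $\mathbf{D}$ equals the set of maps $f:X\to\{0,1\}$ that preserve $\sqsubseteq$, i.e. such that $s\sqsubseteq t$ implies $\min f[s]\le\max f[t]$ for all finite $s,t\subseteq X$.
   Context: A structure is a set with constants, relations and (possibly partial) operations of a first-order language; homomorphisms preserve them. A structure is $\mathbf{D}$-separated if it embeds (injective homomorphism preserving and reflecting all relations) into some power of $\mathbf{D}$. The maps preserving $\sqsubseteq$ are exactly the homomorphisms from $(X,\sqsubseteq)$ into the structure $\mathbf{I}$ on $\{0,1\}$ whose relations $I_{n,m}(a_0,\dots,a_{n-1},b_0,\dots,b_{m-1})$ mean $\min_i a_i\le\max_j b_j$. *)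

From mathcomp Require Import all_boot.
From Stdlib Require Import ClassicalEpsilon.
Set Implicit Arguments. Unset Strict Implicit. Unset Printing Implicit Defensive.

Record signature := Signature {
  csym : Type;
  fsym : Type;
  farity : fsym -> nat;
  rsym : Type;
  rarity : rsym -> nat }.

(* A structure over L with universe A; operations may be partial (None = undefined). *)
Record structure (L : signature) (A : Type) := Structure {
  cst : csym L -> A;
  op  : forall f : fsym L, ('I_(@farity L f) -> A) -> option A;
  rel : forall r : rsym L, ('I_(@rarity L r) -> A) -> Prop }.
Arguments cst {L A} s c.
Arguments op {L A} s f x.
Arguments rel {L A} s r x.

Definition hom (L : signature) (A B : Type) (SA : structure L A) (SB : structure L B)
  (h : A -> B) : Prop :=
  (forall c, h (cst SA c) = cst SB c) /\
  (forall f (x : 'I_(@farity L f) -> A) y,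
      op SA f x = Some y -> op SB f (fun k => h (x k)) = Some (h y)) /\
  (forall r (x : 'I_(@rarity L r) -> A), rel SA r x -> rel SB r (fun k => h (x k))).

Definition embedding (L : signature) (A B : Type) (SA : structure L A) (SB : structure L B)
  (h : A -> B) : Prop :=
  hom SA SB h /\ injective h /\
  (forall r (x : 'I_(@rarity L r) -> A), rel SB r (fun k => h (x k)) -> rel SA r x).

(* The power D^I: constants and relations pointwise; an operation is defined
   at a tuple iff it is defined in every coordinate, with the coordinatewise value. *)
Definition pow_op (L : signature) (D : Type) (SD : structure L D) (I : Type)
  (f : fsym L) (x : 'I_(@farity L f) -> (I -> D)) : option (I -> D) :=
  match excluded_middle_informative
          (forall i, exists y, op SD f (fun k => x k i) = Some y) with
  | left H => Some (fun i => proj1_sig (constructive_indefinite_description _ (H i)))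
  | right _ => None
  end.

Definition power (L : signature) (D : Type) (SD : structure L D) (I : Type)
  : structure L (I -> D) :=
  {| cst := fun c _ => cst SD c;
     op := @pow_op L D SD I;
     rel := fun r x => forall i, rel SD r (fun k => x k i) |}.

Definition separated (L : signature) (D X : Type) (SD : structure L D) (SX : structure L X)
  : Prop :=
  exists (I : Type) (e : X -> (I -> D)), embedding SX (power SD I) e.

(* For f : X -> {0,1} (0 = false, 1 = true) and finite s, t ⊆ X (given as
   lists), min f[s] <= max f[t], with min ∅ = 1 and max ∅ = 0. *)
Definition min_img (X : Type) (f : X -> bool) (s : seq X) : bool := all f s.
Definition max_img (X : Type) (f : X -> bool) (t : seq X) : bool := has f t.
Definition minmax_le (X : Type) (f : X -> bool) (s t : seq X) : Prop :=
  (nat_of_bool (min_img f s) <= nat_of_bool (max_img f t))%N.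

Definition sqle (L : signature) (X : Type) (SD : structure L bool) (SX : structure L X)
  (s t : seq X) : Prop :=
  forall h : X -> bool, hom SX SD h -> minmax_le h s t.

Definition preserves_sqle (L : signature) (X : Type) (SD : structure L bool)
  (SX : structure L X) (f : X -> bool) : Prop :=
  forall s t : seq X, sqle SD SX s t -> minmax_le f s t.

(* A map f preserving ⊑ agrees with some homomorphism on every finite set zs:
   otherwise s := {z in zs | f z = 1} ⊑ t := {z in zs | f z = 0}, which f
   violates.  Each homomorphism condition mentions only finitely many
   elements, so f is itself a homomorphism. *)

From Stdlib Require Import Classical FunctionalExtensionality.
From mathcomp Require Import all_boot.

Lemma minmax_leE (X : Type) (f : X -> bool) (s t : seq X) :
  minmax_le f s t = (all f s ==> has f t).
Proof. by rewrite /minmax_le /min_img /max_img; case: (all f s); case: (has f t). Qed.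

Lemma map_eq_split (X : Type) (h f : X -> bool) (zs : seq X) :
  all h (filter f zs) -> ~~ has h (filter (predC f) zs) -> map h zs = map f zs.
Proof.
elim: zs => [|z zs IH] //=; case: (f z) => /=.
- by case/andP=> -> hs ht; rewrite (IH hs ht).
- by rewrite negb_or => hs /andP[/negbTE -> ht]; rewrite (IH hs ht).
Qed.

Lemma map_tuple_eq (A B : Type) (h f : A -> B) (n : nat) (x : 'I_n -> A) :
  map h (map x (enum 'I_n)) = map f (map x (enum 'I_n)) ->
  (fun k => h (x k)) = (fun k => f (x k)).
Proof.
rewrite -!map_comp => /eq_in_map Ehf.
by apply: functional_extensionality => k; apply: Ehf; rewrite -enumT mem_enum.
Qed.

Lemma hom_of_locally_hom (L : signature) (A B : Type)
    (SA : structure L A) (SB : structure L B) (f : A -> B) :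
  (forall zs : seq A, exists2 h, hom SA SB h & map h zs = map f zs) ->
  hom SA SB f.
Proof.
move=> loc; split; [|split].
- move=> c; have [h [hc _] [<-]] := loc [:: cst SA c]; exact: hc.
- move=> g x y xy.
  have [h [_ [hop _]]] := loc (y :: map x (enum 'I_(farity g))).
  case=> <- /map_tuple_eq <-; exact: hop.
- move=> r x xr; have [h [_ [_ hrel]] /map_tuple_eq <-] := loc (map x (enum 'I_(rarity r))).
  exact: hrel.
Qed.

Lemma preserves_sqle_locally_hom (L : signature) (SD : structure L bool)
    (X : Type) (SX : structure L X) (f : X -> bool) :
  preserves_sqle SD SX f ->
  forall zs : seq X, exists2 h, hom SX SD h & map h zs = map f zs.
Proof.
move=> pf zs; set s := filter f zs; set t := filter (predC f) zs.
have not_fst : ~ minmax_le f s t.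
  have := filter_all (predC f) zs; rewrite all_predC => /negbTE hft.
  by rewrite minmax_leE filter_all hft.
have not_sqle : ~ sqle SD SX s t by move/pf.
have [h not_hst_of_hom] := not_all_ex_not _ _ not_sqle.
have [hh not_hst] := imply_to_and _ _ not_hst_of_hom.
exists h => //; move: not_hst; rewrite minmax_leE => /negP.
by rewrite negb_imply => /andP[hs ht]; apply: map_eq_split.
Qed.

Theorem mainTheorem9 (L : signature) (SD : structure L bool) (X : Type)
  (SX : structure L X) :
  separated SD SX ->
  forall f : X -> bool, hom SX SD f <-> preserves_sqle SD SX f.
Proof.
move=> _ f; split => [hf s t | pf]; first exact.
apply: hom_of_locally_hom; exact: preserves_sqle_locally_hom.
Qed.
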